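(* The fixed points satisfy $\eta_1<\eta_0$.
   Context: Parameters $a,b,p,q\in(0,1)$ with $a+b\ne1$. $\alpha_0(z)=(1-p)(a+b-1)z+1-b+pb$, $\alpha_1(z)=(1-q)(1-a-b)z+b+q-bq$, $r_0(z)=\frac{(a+b-1)z+1-b}{\alpha_0(z)}$, $r_1(z)=\frac{q(a+b-1)z+q-qb}{\alpha_1(z)}$ for $z\in[0,1]$. $\eta_0$ and $\eta_1$ denote the unique fixed points in $[0,1]$ of $r_0$ and $r_1$ respectively. *)

From Stdlib Require Import Reals.
Open Scope R_scope.

Definition alpha0 (a b p : R) (z : R) : R := (1 - p) * (a + b - 1) * z + 1 - b + p * b.
Definition alpha1 (a b q : R) (z : R) : R := (1 - q) * (1 - a - b) * z + b + q - b * q.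
Definition r0 (a b p : R) (z : R) : R := ((a + b - 1) * z + 1 - b) / alpha0 a b p z.
Definition r1 (a b q : R) (z : R) : R := (q * (a + b - 1) * z + q - q * b) / alpha1 a b q z.

(* Clearing the denominator, [r0 z = z] says that the quadratic
   [gap0 z := z * alpha0 z - ((a+b-1) z + 1 - b)] vanishes, and [gap0] is
   negative at 0 and positive at 1, so it is nonnegative on [0,1] after its
   root [eta0].  The numerator of [r1] is [q] times that of [r0], while
   [alpha1 z - q * alpha0 z = (1 - p q) (b - (a+b-1) z) > 0]; hence the fixed
   point [eta1] of [r1] satisfies [gap0 eta1 < 0], which puts it strictly
   before [eta0]. *)
From Stdlib Require Import Reals Lra Psatz.
Open Scope R_scope.

Lemma convex_combination_pos (u v z : R) :
  0 < u -> 0 < v -> 0 <= z <= 1 -> 0 < (1 - z) * u + z * v.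
Proof.
  intros Hu Hv [z_ge0 [z_lt1 | ->]]; nra.
Qed.

Lemma quadratic_nonneg_right_of_root (A B C x0 y : R) :
  C < 0 -> 0 < A + B + C -> A * x0 ^ 2 + B * x0 + C = 0 -> 0 <= x0 ->
  x0 <= y <= 1 -> 0 <= A * y ^ 2 + B * y + C.
Proof.
  intros HC H1 Hx0 x0_ge0 [x0_le_y y_le1].
  assert (x0_pos : 0 < x0) by (destruct x0_ge0 as [|<-]; nra).
  assert (slope_at_0 : 0 < A * x0 + B) by nra.
  assert (slope_at_1 : 0 < A * (1 + x0) + B) by nra.
  assert (slope_at_y : 0 <= A * (y + x0) + B) by nra.
  replace (A * y ^ 2 + B * y + C) with ((y - x0) * (A * (y + x0) + B)) by nra.
  nra.
Qed.

Definition gap0 (a b p z : R) : R := z * alpha0 a b p z - ((a + b - 1) * z + 1 - b).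

Lemma gap0_quadratic (a b p z : R) :
  gap0 a b p z =
  (1 - p) * (a + b - 1) * z ^ 2 + (1 - b + p * b - (a + b - 1)) * z - (1 - b).
Proof. unfold gap0, alpha0; ring. Qed.

Lemma alpha0_pos (a b p z : R) :
  0 < a < 1 -> 0 < b < 1 -> 0 < p < 1 -> 0 <= z <= 1 -> 0 < alpha0 a b p z.
Proof.
  intros Ha Hb Hp Hz; unfold alpha0.
  replace ((1 - p) * (a + b - 1) * z + 1 - b + p * b)
    with ((1 - z) * (1 - b + p * b) + z * (a * (1 - p) + p)) by ring.
  apply convex_combination_pos; nra.
Qed.

Lemma alpha1_pos (a b q z : R) :
  0 < a < 1 -> 0 < b < 1 -> 0 < q < 1 -> 0 <= z <= 1 -> 0 < alpha1 a b q z.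
Proof.
  intros Ha Hb Hq Hz; unfold alpha1.
  replace ((1 - q) * (1 - a - b) * z + b + q - b * q)
    with ((1 - z) * (b + q - b * q) + z * (1 - a + q * a)) by ring.
  apply convex_combination_pos; nra.
Qed.

Lemma alpha1_gt_q_alpha0 (a b p q z : R) :
  0 < a < 1 -> 0 < b < 1 -> 0 < p < 1 -> 0 < q < 1 -> 0 <= z <= 1 ->
  q * alpha0 a b p z < alpha1 a b q z.
Proof.
  intros Ha Hb Hp Hq Hz.
  assert (0 < (1 - z) * b + z * (1 - a)) by (apply convex_combination_pos; lra).
  assert (0 < (1 - p * q) * ((1 - z) * b + z * (1 - a))) by (apply Rmult_lt_0_compat; nra).
  unfold alpha0, alpha1; nra.
Qed.

Lemma gap0_r0_fixed (a b p z : R) :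
  0 < a < 1 -> 0 < b < 1 -> 0 < p < 1 -> 0 <= z <= 1 ->
  r0 a b p z = z -> gap0 a b p z = 0.
Proof.
  intros Ha Hb Hp Hz Hfix.
  pose proof (alpha0_pos a b p z Ha Hb Hp Hz).
  unfold r0 in Hfix; unfold gap0.
  rewrite <- Hfix at 1; field; lra.
Qed.

Lemma gap0_r1_fixed (a b p q z : R) :
  0 < a < 1 -> 0 < b < 1 -> 0 < p < 1 -> 0 < q < 1 -> 0 <= z <= 1 ->
  r1 a b q z = z -> gap0 a b p z < 0.
Proof.
  intros Ha Hb Hp Hq Hz Hfix.
  pose proof (alpha1_pos a b q z Ha Hb Hq Hz).
  assert (q * ((a + b - 1) * z + 1 - b) = z * alpha1 a b q z).
  { rewrite <- Hfix at 2; unfold r1; field; lra. }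
  pose proof (alpha1_gt_q_alpha0 a b p q z Ha Hb Hp Hq Hz).
  destruct Hz as [[z_pos | <-] _].
  - assert (q * gap0 a b p z < 0) by (unfold gap0; nra).
    nra.
  - unfold gap0; lra.
Qed.

Theorem lemma2p32 (a b p q eta0 eta1 : R) :
  0 < a < 1 -> 0 < b < 1 -> 0 < p < 1 -> 0 < q < 1 -> a + b <> 1 ->
  0 <= eta0 <= 1 -> r0 a b p eta0 = eta0 ->
  0 <= eta1 <= 1 -> r1 a b q eta1 = eta1 ->
  eta1 < eta0.
Proof.
  intros Ha Hb Hp Hq _ H0 E0 H1 E1.
  destruct (Rlt_or_le eta1 eta0) as [|Hle]; [assumption | exfalso].
  pose proof (gap0_r0_fixed a b p eta0 Ha Hb Hp H0 E0) as root0.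
  pose proof (gap0_r1_fixed a b p q eta1 Ha Hb Hp Hq H1 E1) as neg1.
  rewrite gap0_quadratic in root0, neg1.
  assert (0 <= (1 - p) * (a + b - 1) * eta1 ^ 2
               + (1 - b + p * b - (a + b - 1)) * eta1 - (1 - b)).
  { apply (quadratic_nonneg_right_of_root _ _ _ eta0); nra. }
  lra.
Qed.
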